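(* Let $P\subset\mathbb{N}$ and let $(X_P,\sigma)$ be the spacing shift generated by $P$. If $(X_P,\sigma)$ is weakly mixing, then there exists a dense Mycielski subset $S\subset X_P$ with $\sigma(S)\subset S$ which is Banach scrambled for $\sigma$.
   Context: $\Sigma=\{0,1\}^{\mathbb{Z}_+}$ with the product topology and shift $\sigma(x)_n=x_{n+1}$. For $P\subset\mathbb{N}$, $X_P$ is the set of $x\in\Sigma$ such that whenever $x_i=x_j=1$ we have $|i-j|\in P\cup\{0\}$; it is closed and $\sigma$-invariant. A system $(X,T)$ is weakly mixing if $(X\times X,T\times T)$ is topologically transitive. A set $F\subset\mathbb{Z}_+$ has Banach density one if for every $\lambda<1$ there is $N\ge1$ with $\#(F\cap I)\ge\lambda\,\#(I)$ for every interval of integers $I\subset\mathbb{Z}_+$ with $\#(I)\ge N$. A pair $(x,y)$ is Banach proximal if for every $\varepsilon>0$ the set $\{n: d(T^nx,T^ny)<\varepsilon\}$ has Banach density one; it is asymptotic if $d(T^nx,T^ny)\to0$. A subset with at least two points is Banach scrambled if every pair of distinct points in it is Banach proximal but not asymptotic. A Mycielski set is a countable union of Cantor sets. *)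

From Stdlib Require Import Reals List Classical ClassicalEpsilon.
Open Scope R_scope.

(** Sigma = {0,1}^{Z_+}, coded as nat -> bool (true = 1). *)
Definition Sigma := nat -> bool.

Definition shift (x : Sigma) : Sigma := fun n => x (S n).
Definition shiftn (n : nat) (x : Sigma) : Sigma := Nat.iter n shift x.

Definition first_diff_dist (x y : Sigma) (r : R) : Prop :=
  (x = y /\ r = 0) \/
  (exists k : nat, (forall i, (i < k)%nat -> x i = y i) /\ x k <> y k /\ r = / 2 ^ k).
Definition d (x y : Sigma) : R := epsilon (inhabits 0) (first_diff_dist x y).

(** Spacing shift X_P: whenever x_i = x_j = 1, |i-j| in P ∪ {0}. *)
Definition X_P (P : nat -> Prop) (x : Sigma) : Prop :=
  forall i j : nat, x i = true -> x j = true ->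
    (i = j \/ P ((i - j) + (j - i))%nat).

Definition open_in (A U : Sigma -> Prop) : Prop :=
  (forall x, U x -> A x) /\
  forall x, U x -> exists eps, eps > 0 /\
    forall y, A y -> d x y < eps -> U y.

Definition open_in2 (A : Sigma -> Prop) (U : Sigma -> Sigma -> Prop) : Prop :=
  (forall x y, U x y -> A x /\ A y) /\
  forall x y, U x y -> exists eps, eps > 0 /\
    forall x' y', A x' -> A y' -> d x x' < eps -> d y y' < eps -> U x' y'.

(** (A x A, sigma x sigma) is topologically transitive:
    for nonempty open U, V there is n in Z_+ with U ∩ (sigma x sigma)^{-n} V ≠ ∅. *)
Definition weakly_mixing (A : Sigma -> Prop) : Prop :=
  forall U V : Sigma -> Sigma -> Prop,
    open_in2 A U -> open_in2 A V ->
    (exists x y, U x y) -> (exists x y, V x y) ->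
    exists (n : nat) x y, U x y /\ V (shiftn n x) (shiftn n y).

Definition continuous_on (C : Sigma -> Prop) (f : Sigma -> Sigma) : Prop :=
  forall x, C x -> forall eps, eps > 0 -> exists delta, delta > 0 /\
    forall y, C y -> d x y < delta -> d (f x) (f y) < eps.

(** Cantor set: a subset homeomorphic to the Cantor space {0,1}^N. *)
Definition Cantor_set (C : Sigma -> Prop) : Prop :=
  exists f g : Sigma -> Sigma,
    continuous_on (fun _ => True) f /\
    (forall x, C x <-> exists z, x = f z) /\
    (forall z, g (f z) = z) /\
    continuous_on C g.

Definition Mycielski (S : Sigma -> Prop) : Prop :=
  exists Cs : nat -> (Sigma -> Prop),
    (forall k, Cantor_set (Cs k)) /\ (forall x, S x <-> exists k, Cs k x).

Definition dense_in (A S : Sigma -> Prop) : Prop :=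
  (forall x, S x -> A x) /\
  forall x, A x -> forall eps, eps > 0 -> exists s, S s /\ d x s < eps.

Definition count_in (F : nat -> Prop) (a L : nat) : nat :=
  length (filter (fun n => if excluded_middle_informative (F n) then true else false)
                 (seq a L)).

Definition banach_density_one (F : nat -> Prop) : Prop :=
  forall lam : R, lam < 1 -> exists N : nat, (1 <= N)%nat /\
    forall a L : nat, (N <= L)%nat -> INR (count_in F a L) >= lam * INR L.

Definition banach_proximal (x y : Sigma) : Prop :=
  forall eps, eps > 0 -> banach_density_one (fun n => d (shiftn n x) (shiftn n y) < eps).

Definition asymptotic (x y : Sigma) : Prop :=
  forall eps, eps > 0 -> exists N : nat, forall n, (N <= n)%nat ->
    d (shiftn n x) (shiftn n y) < eps.

Definition banach_scrambled (S : Sigma -> Prop) : Prop :=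
  (exists x y, S x /\ S y /\ x <> y) /\
  forall x y, S x -> S y -> x <> y -> banach_proximal x y /\ ~ asymptotic x y.

(* Weak mixing of X_P gives the extension property: every finite P-spaced set E below M
   has a common P-neighbour p >= M (transitivity on two cylinders).  Iterating a choice
   function for it, we build positions pos 0 < pos 1 < ..., each more than twice the
   previous ones (hence a Sidon set), where index i lies in class k = unpair1 i and every
   class, together with a "seed" (a finite P-spaced word coded by k), stays P-spaced.
   For each class k and z in {0,1}^N the point `point k z` has ones on the seed, on the
   even members of class k, and on the odd members recording the coordinates of z; the
   shifted families {shiftn n (point k z) | z} are Cantor sets whose union S is the
   required set:
   - S is dense since seeds realize all initial words of points of X_P;
   - S is shift-invariant by construction;
   - pairs in S are Banach proximal because their ones are sparse (gaps tend to
     infinity), which gives Banach density one through a window-counting criterion;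
   - distinct points of S are not asymptotic: eventual agreement forces equal class and
     shift by the Sidon property, and then the codes differ at infinitely many slots. *)
From Stdlib Require Import Reals Lra Lia List Classical ClassicalEpsilon FunctionalExtensionality.
From Stdlib Require Cantor.
Import ListNotations.
Open Scope R_scope.

Definition agree_upto (K : nat) (x y : Sigma) : Prop :=
  forall i, (i <= K)%nat -> x i = y i.

Lemma first_difference (x y : Sigma) (n : nat) : x n <> y n ->
  exists k, (forall i, (i < k)%nat -> x i = y i) /\ x k <> y k.
Proof.
  induction n as [n IH] using (well_founded_induction Wf_nat.lt_wf); intro Hn.
  destruct (classic (forall i, (i < n)%nat -> x i = y i)) as [H | H]; [eauto |].
  apply not_all_ex_not in H as [i Hi].
  apply imply_to_and in Hi as [Hin Hi]. eauto.
Qed.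

Lemma d_spec (x y : Sigma) : first_diff_dist x y (d x y).
Proof.
  unfold d; apply epsilon_spec.
  destruct (classic (x = y)) as [-> | Hne]; [exists 0; left; auto |].
  assert (exists n, x n <> y n) as [n Hn].
  { apply not_all_ex_not; intro H; apply Hne, functional_extensionality, H. }
  destruct (first_difference x y n Hn) as [k [Hk1 Hk2]].
  exists (/ 2 ^ k); right; exists k; auto.
Qed.

Lemma pow2_pos (k : nat) : 0 < 2 ^ k.
Proof. apply pow_lt; lra. Qed.

Lemma inv_pow2_pos (k : nat) : / 2 ^ k > 0.
Proof. apply Rlt_gt, Rinv_0_lt_compat, pow2_pos. Qed.

Lemma d_lt_of_agree (K : nat) (x y : Sigma) : agree_upto K x y -> d x y < / 2 ^ K.
Proof.
  intro H. destruct (d_spec x y) as [[_ ->] | [k [_ [Hk ->]]]]; [apply inv_pow2_pos |].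
  apply Rinv_lt_contravar; [apply Rmult_lt_0_compat; apply pow2_pos |].
  apply Rlt_pow; [lra |].
  destruct (Nat.lt_ge_cases K k) as [h | h]; [exact h |].
  exfalso; apply Hk, H, h.
Qed.

Lemma agree_of_d_lt (K : nat) (x y : Sigma) : d x y < / 2 ^ K -> agree_upto K x y.
Proof.
  intros H i Hi. destruct (d_spec x y) as [[-> _] | [k [Hk1 [_ E]]]]; [reflexivity |].
  destruct (Nat.lt_ge_cases i k) as [h | h]; [auto |].
  exfalso. rewrite E in H.
  assert (/ 2 ^ K <= / 2 ^ k); [| lra].
  apply Rinv_le_contravar; [apply pow2_pos | apply Rle_pow; [lra | lia]].
Qed.

Lemma small_pow (eps : R) : eps > 0 -> exists K, / 2 ^ K < eps.
Proof.
  intro He. destruct (INR_archimed eps 1 He) as [n Hn]. exists n.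
  assert (Hlt : INR n < 2 ^ n).
  { clear Hn. induction n as [| n IHn]; [simpl; lra |].
    rewrite S_INR; change (2 ^ S n) with (2 * 2 ^ n). assert (1 <= 2 ^ n) by (clear; induction n; simpl; lra). lra. }
  pose proof (pow2_pos n).
  apply (Rmult_lt_reg_l (2 ^ n)); auto. rewrite Rinv_r by lra. nra.
Qed.

Lemma continuous_of_finite_dependence (C : Sigma -> Prop) (f : Sigma -> Sigma) :
  (forall m, exists m', forall u v, agree_upto m' u v -> agree_upto m (f u) (f v)) ->
  continuous_on C f.
Proof.
  intros H x _ eps He. destruct (small_pow eps He) as [m Hm].
  destruct (H m) as [m' Hm']. exists (/ 2 ^ m'). split; [apply inv_pow2_pos |].
  intros y _ Hy. eapply Rlt_trans; [| exact Hm].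
  apply d_lt_of_agree, Hm', agree_of_d_lt, Hy.
Qed.

Lemma shiftn_spec (n : nat) (x : Sigma) (i : nat) : shiftn n x i = x (n + i)%nat.
Proof.
  revert i; induction n as [| n IHn]; intro i; [reflexivity |].
  change (shiftn n x (S i) = x (S (n + i))). rewrite IHn. f_equal; lia.
Qed.

Definition dec (Q : Prop) : bool := if excluded_middle_informative Q then true else false.

Lemma dec_true (Q : Prop) : dec Q = true <-> Q.
Proof. unfold dec; destruct excluded_middle_informative; split; congruence. Qed.

Lemma count_add (F : nat -> Prop) (a L1 L2 : nat) :
  count_in F a (L1 + L2) = (count_in F a L1 + count_in F (a + L1) L2)%nat.
Proof. unfold count_in. rewrite seq_app, filter_app, length_app. reflexivity. Qed.

Lemma count_le_list (F : nat -> Prop) (a L : nat) (l : list nat) :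
  (forall n, (a <= n < a + L)%nat -> F n -> In n l) -> (count_in F a L <= length l)%nat.
Proof.
  intro H. unfold count_in. apply NoDup_incl_length; [apply NoDup_filter, seq_NoDup |].
  intros n Hn. apply filter_In in Hn as [H1 H2]. apply in_seq in H1.
  apply H; [exact H1 | apply (dec_true (F n)), H2].
Qed.

Lemma count_compl (F : nat -> Prop) (a L : nat) :
  (count_in F a L + count_in (fun n => ~ F n) a L)%nat = L.
Proof.
  unfold count_in. rewrite <- (length_seq L a) at 3. generalize (seq a L).
  induction l as [| n l IH]; simpl; auto.
  destruct (excluded_middle_informative (F n)); destruct (excluded_middle_informative (~ F n));
    simpl; try tauto; lia.
Qed.

Lemma count_long_windows (E : nat -> Prop) (M N0 c : nat) :
  (forall a, (N0 <= a)%nat -> (M <= count_in E a M + c)%nat) ->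
  forall a L, (M * L <= M * count_in E a L + M * (N0 + M) + c * L)%nat.
Proof.
  intros Hwin a L.
  assert (Hblocks : forall q b, (N0 <= b)%nat -> (q * M <= count_in E b (q * M) + q * c)%nat).
  { induction q as [| q IHq]; intros b Hb; [simpl; lia |].
    rewrite Nat.mul_succ_l, count_add.
    specialize (IHq b Hb). specialize (Hwin (b + q * M)%nat ltac:(lia)). lia. }
  destruct (Nat.eq_dec M 0) as [-> | HM]; [lia |].
  destruct (Nat.lt_ge_cases L N0) as [HL | HL].
  { assert (M * L <= M * N0)%nat by (apply Nat.mul_le_mono_l; lia). lia. }
  set (q := ((L - N0) / M)%nat). set (r := ((L - N0) mod M)%nat).
  assert (Hr : (r < M)%nat) by (apply Nat.mod_upper_bound; exact HM).
  assert (HLqr : L = (N0 + (q * M + r))%nat).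
  { pose proof (Nat.div_mod (L - N0) M HM). fold q r in H. lia. }
  assert (Hcount : (count_in E (a + N0) (q * M) <= count_in E a L)%nat).
  { clearbody q r. subst L. rewrite count_add, count_add. lia. }
  specialize (Hblocks q (a + N0)%nat ltac:(lia)).
  assert (q * M * c <= L * c)%nat by (apply Nat.mul_le_mono_r; lia).
  nia.
Qed.

Lemma banach_density_one_of_windows (E : nat -> Prop) (c : nat) :
  (forall M, (1 <= M)%nat -> exists N0, forall a, (N0 <= a)%nat -> (M <= count_in E a M + c)%nat) ->
  banach_density_one E.
Proof.
  intros H lam Hlam.
  destruct (Rle_lt_dec lam 0) as [Hl | Hl].
  { exists 1%nat; split; [lia |]. intros a L _.
    pose proof (pos_INR (count_in E a L)). pose proof (pos_INR L). nra. }
  set (eps := 1 - lam).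
  destruct (INR_archimed eps (2 * INR c) ltac:(unfold eps; lra)) as [M0 HM0].
  destruct (H (S M0) ltac:(lia)) as [N0 HN0].
  destruct (INR_archimed eps (2 * (INR N0 + INR (S M0))) ltac:(unfold eps; lra)) as [N1 HN1].
  exists (S N1). split; [lia |]. intros a L HL.
  pose proof (count_long_windows E (S M0) N0 c HN0 a L) as Hcount.
  apply le_INR in Hcount. rewrite !plus_INR, !mult_INR, plus_INR in Hcount.
  apply le_INR in HL.
  set (M := INR (S M0)) in *. set (C := INR (count_in E a L)) in *.
  assert (HM : INR M0 < M) by (unfold M; rewrite S_INR; lra).
  assert (HLN : INR N1 < INR L) by (rewrite S_INR in HL; lra).
  pose proof (pos_INR M0). pose proof (pos_INR N0). pose proof (pos_INR c).
  assert (h1 : 2 * INR c * INR L <= M * eps * INR L) by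
    (apply Rmult_le_compat_r; [apply pos_INR | unfold eps in *; nra]).
  assert (h2 : 2 * (INR N0 + M) <= INR L * eps) by (unfold eps in *; nra).
  assert (h3 : 2 * M * (INR N0 + M) <= M * (INR L * eps)) by nra.
  assert (HMpos : 0 < M) by lra.
  apply Rle_ge, (Rmult_le_reg_l M); [exact HMpos |].
  unfold eps in *. nra.
Qed.

Definition sparse (x : Sigma) : Prop :=
  forall G, exists N0, forall s s', x s = true -> x s' = true ->
    (N0 <= s)%nat -> (s < s')%nat -> (G <= s' - s)%nat.

Lemma window_unique_one (x : Sigma) (G N0 a : nat) :
  (forall s s', x s = true -> x s' = true -> (N0 <= s)%nat -> (s < s')%nat -> (G <= s' - s)%nat) ->
  (N0 <= a)%nat -> exists s0, forall s, (a <= s < a + G)%nat -> x s = true -> s = s0.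
Proof.
  intros H Ha.
  destruct (classic (exists s, (a <= s < a + G)%nat /\ x s = true)) as [[s0 [Hs0 Hx0]] | Hnone].
  - exists s0. intros s Hs Hxs. destruct (Nat.lt_trichotomy s s0) as [h | [h | h]]; auto.
    + specialize (H s s0 Hxs Hx0 ltac:(lia) h). lia.
    + specialize (H s0 s Hx0 Hxs ltac:(lia) h). lia.
  - exists 0%nat. intros s Hs Hxs. exfalso; eauto.
Qed.

Lemma far_apart_has_one (K n : nat) (x y : Sigma) :
  ~ d (shiftn n x) (shiftn n y) < / 2 ^ K ->
  exists i, (i <= K)%nat /\ (x (n + i)%nat = true \/ y (n + i)%nat = true).
Proof.
  intro Hfar. apply NNPP; intro Hno. apply Hfar, d_lt_of_agree. intros i Hi.
  rewrite !shiftn_spec.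
  destruct (x (n + i)%nat) eqn:Ex, (y (n + i)%nat) eqn:Ey; auto; exfalso; apply Hno; eauto.
Qed.

(* Two sparse points form a Banach proximal pair: in a long window each of them has
   at most one 1, so the pair is far apart at no more than 2(K+1) times. *)
Lemma proximal_of_sparse (x y : Sigma) : sparse x -> sparse y -> banach_proximal x y.
Proof.
  intros Hx Hy eps He. destruct (small_pow eps He) as [K HK].
  apply (banach_density_one_of_windows _ (2 * (K + 1))).
  intros M _.
  destruct (Hx (M + K)%nat) as [Nx HNx]. destruct (Hy (M + K)%nat) as [Ny HNy].
  exists (Nx + Ny)%nat. intros a Ha.
  destruct (window_unique_one x _ _ a HNx ltac:(lia)) as [sx Hsx].
  destruct (window_unique_one y _ _ a HNy ltac:(lia)) as [sy Hsy].
  assert (Hmiss : (count_in (fun n => ~ (d (shiftn n x) (shiftn n y) < eps)%R) a M <=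
                   length (seq (sx - K) (K + 1) ++ seq (sy - K) (K + 1)))%nat).
  { apply count_le_list. intros n Hn Hfar.
    assert (Hfar' : ~ d (shiftn n x) (shiftn n y) < / 2 ^ K) by (intro; apply Hfar; lra).
    destruct (far_apart_has_one K n x y Hfar') as [i [Hi [E | E]]]; apply in_or_app.
    - left. specialize (Hsx (n + i)%nat ltac:(lia) E). apply in_seq. lia.
    - right. specialize (Hsy (n + i)%nat ltac:(lia) E). apply in_seq. lia. }
  pose proof (count_compl (fun n => d (shiftn n x) (shiftn n y) < eps) a M).
  rewrite length_app, !length_seq in Hmiss. lia.
Qed.

(* A set of positions is P-spaced when any two distinct elements differ by an element
   of P; by definition X_P consists of the points whose set of ones is P-spaced. *)
Definition spaced (P : nat -> Prop) (G : nat -> Prop) : Prop :=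
  forall u v, G u -> G v -> u = v \/ P ((u - v) + (v - u))%nat.

Lemma spaced_mono (P G H : nat -> Prop) :
  (forall u, G u -> H u) -> spaced P H -> spaced P G.
Proof. intros HGH HH u v Hu Hv. apply HH; auto. Qed.

Lemma spaced_add (P G : nat -> Prop) (p : nat) :
  spaced P G -> (forall e, G e -> (e < p)%nat /\ P (p - e)%nat) ->
  spaced P (fun u => G u \/ u = p).
Proof.
  intros HG Hp u v [Hu | ->] [Hv | ->]; auto.
  - right. destruct (Hp u Hu) as [Hlt HP].
    replace ((u - p) + (p - u))%nat with (p - u)%nat by lia. exact HP.
  - right. destruct (Hp v Hv) as [Hlt HP].
    replace ((p - v) + (v - p))%nat with (p - v)%nat by lia. exact HP.
Qed.

Lemma shiftn_X_P (P : nat -> Prop) (n : nat) (x : Sigma) : X_P P x -> X_P P (shiftn n x).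
Proof.
  intros H i j Hi Hj. rewrite shiftn_spec in Hi, Hj.
  destruct (H _ _ Hi Hj) as [E | E]; [left; lia | right].
  replace ((i - j) + (j - i))%nat with ((n + i - (n + j)) + (n + j - (n + i)))%nat by lia.
  exact E.
Qed.

Lemma le_list_max (l : list nat) (u : nat) : In u l -> (u <= list_max l)%nat.
Proof.
  intro Hu. assert (H : Forall (fun k => (k <= list_max l)%nat) l) by (apply list_max_le; lia).
  rewrite Forall_forall in H. auto.
Qed.

Definition cylinder (P : nat -> Prop) (l : list nat) (x y : Sigma) : Prop :=
  X_P P x /\ X_P P y /\ forall e, In e l -> x e = true.

Lemma cylinder_open (P : nat -> Prop) (l : list nat) : open_in2 (X_P P) (cylinder P l).
Proof.
  split; [intros x y [Hx [Hy _]]; auto |].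
  intros x y [_ [_ Hl]]. exists (/ 2 ^ list_max l). split; [apply inv_pow2_pos |].
  intros x' y' Hx' Hy' Hd _. repeat split; auto. intros e He.
  rewrite <- (agree_of_d_lt _ x x' Hd e (le_list_max l e He)). auto.
Qed.

Lemma cylinder_nonempty (P : nat -> Prop) (l : list nat) :
  spaced P (fun u => In u l) -> exists x y, cylinder P l x y.
Proof.
  intro Hl. set (chi := fun u => dec (In u l)).
  assert (Hchi : X_P P chi).
  { intros i j Hi Hj. apply Hl; apply (dec_true (In _ l)); assumption. }
  exists chi, chi. repeat split; auto. intros e He. apply dec_true, He.
Qed.

(* Transitivity on the cylinders [E] and [M] gives a
   point of X_P with ones on E and at n + M. *)
Lemma extension_of_weak_mixing (P : nat -> Prop) : weakly_mixing (X_P P) ->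
  forall (E : list nat) (M : nat), spaced P (fun u => In u E) -> (forall e, In e E -> (e < M)%nat) ->
  exists p, (M <= p)%nat /\ forall e, In e E -> P (p - e)%nat.
Proof.
  intros Hwm E M HE HM.
  assert (HMsp : spaced P (fun u => In u [M])).
  { intros u v [-> | []] [-> | []]. left; reflexivity. }
  destruct (Hwm _ _ (cylinder_open P E) (cylinder_open P [M])
              (cylinder_nonempty P E HE) (cylinder_nonempty P [M] HMsp))
    as [n [x [y [[Hx [_ HxE]] [_ [_ HxM]]]]]].
  specialize (HxM M (or_introl eq_refl)). rewrite shiftn_spec in HxM.
  exists (n + M)%nat. split; [lia |]. intros e He.
  specialize (HM e He). destruct (Hx _ _ HxM (HxE e He)) as [Eq | HP]; [lia |].
  replace (n + M - e)%nat with ((n + M - e) + (e - (n + M)))%nat by lia. exact HP.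
Qed.

Definition extender (P : nat -> Prop) (pick : list nat -> nat -> nat) : Prop :=
  forall E M, (M <= pick E M)%nat /\
    (spaced P (fun u => In u E) -> (forall e, In e E -> (e < M)%nat) ->
     forall e, In e E -> P (pick E M - e)%nat).

Lemma extender_exists (P : nat -> Prop) : weakly_mixing (X_P P) -> exists pick, extender P pick.
Proof.
  intro Hwm.
  assert (H : forall E M, exists p, (M <= p)%nat /\
     (spaced P (fun u => In u E) -> (forall e, In e E -> (e < M)%nat) ->
      forall e, In e E -> P (p - e)%nat)).
  { intros E M.
    destruct (classic (spaced P (fun u => In u E) /\ (forall e, In e E -> (e < M)%nat)))
      as [[HE HM] | Hbad].
    - destruct (extension_of_weak_mixing P Hwm E M HE HM) as [p [Hp HP]]. eauto.
    - exists M. split; [lia |]. intros HE HM. exfalso; auto. }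
  exists (fun E M => proj1_sig (constructive_indefinite_description _ (H E M))).
  intros E M. exact (proj2_sig (constructive_indefinite_description _ (H E M))).
Qed.

Local Open Scope nat_scope.

(* It serves three purposes: the length
   of a coded word, the class of an index of the construction, and the coordinate of z
   read at a slot of a Cantor piece. *)
Definition unpair1 (n : nat) : nat := fst (Cantor.of_nat n).

Lemma unpair1_pair (a b : nat) : unpair1 (Cantor.to_nat (a, b)) = a.
Proof. unfold unpair1. rewrite Cantor.cancel_of_to. reflexivity. Qed.

Lemma unpair1_le (n : nat) : (unpair1 n <= n).
Proof.
  unfold unpair1. pose proof (Cantor.to_nat_non_decreasing (fst (Cantor.of_nat n)) (snd (Cantor.of_nat n))).
  rewrite <- surjective_pairing, Cantor.cancel_to_of in H. lia.
Qed.

Fixpoint bit (c u : nat) : bool :=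
  match u with 0 => Nat.odd c | S u' => bit (Nat.div2 c) u' end.

Lemma bits_realize (m : nat) : forall x : Sigma, exists c, forall u, (u < m) -> bit c u = x u.
Proof.
  induction m as [| m IHm]; intro x; [exists 0; intros; lia |].
  destruct (IHm (fun u => x (S u))) as [c' Hc'].
  exists (if x 0 then S (2 * c') else (2 * c')).
  intros [| u] Hu; cbn [bit].
  - destruct (x 0); [rewrite Nat.odd_succ, Nat.even_mul | rewrite Nat.odd_mul]; reflexivity.
  - destruct (x 0); [rewrite Nat.div2_succ_double | rewrite Nat.div2_double]; apply Hc'; lia.
Qed.

(* The finite word coded by k = <length, digits>, as a set of positions. *)
Definition word (k u : nat) : Prop :=
  (u < unpair1 k) /\ bit (snd (Cantor.of_nat k)) u = true.

Lemma word_of_prefix (m : nat) (x : Sigma) :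
  exists k, unpair1 k = m /\ forall u, word k u <-> (u < m) /\ x u = true.
Proof.
  destruct (bits_realize m x) as [c Hc]. exists (Cantor.to_nat (m, c)).
  rewrite unpair1_pair. split; [reflexivity |]. intro u. unfold word.
  rewrite unpair1_pair, Cantor.cancel_of_to. simpl.
  split; intros [Hu Hb]; split; auto; [rewrite <- Hc | rewrite Hc]; auto.
Qed.

Lemma bounded_on_initial_segment (h : nat -> nat) (m : nat) :
  exists B, forall i, (i <= m) -> (h i <= B).
Proof.
  induction m as [| m [B HB]]; [exists (h 0); intros i Hi; replace i with 0 by lia; lia |].
  exists (Nat.max B (h (S m))). intros i Hi.
  destruct (Nat.eq_dec i (S m)) as [-> | Hne]; [lia |]. specialize (HB i ltac:(lia)). lia.
Qed.

Section Construction.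

Variable P : nat -> Prop.
Variable pick : list nat -> nat -> nat.
Hypothesis Hpick : extender P pick.

Definition seed (k u : nat) : Prop := spaced P (word k) /\ word k u.

Definition seed_list (k : nat) : list nat :=
  filter (fun u => dec (seed k u)) (seq 0 (unpair1 k)).

Lemma seed_lt (k u : nat) : seed k u -> (u < unpair1 k).
Proof. intros [_ [Hu _]]; exact Hu. Qed.

Lemma in_seed_list (k u : nat) : In u (seed_list k) <-> seed k u.
Proof.
  unfold seed_list. rewrite filter_In, in_seq, dec_true. split; [tauto |].
  intro H. pose proof (seed_lt k u H). split; [lia | exact H].
Qed.

Lemma seed_spaced (k : nat) : spaced P (seed k).
Proof.
  intros u v [Hsp Hu] [_ Hv]. exact (Hsp u v Hu Hv).
Qed.

Lemma seed_of_X_P (x : Sigma) (m : nat) : X_P P x ->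
  exists k, unpair1 k = m /\ forall u, seed k u <-> (u < m) /\ x u = true.
Proof.
  intro Hx. destruct (word_of_prefix m x) as [k [Hk Hw]]. exists k. split; [exact Hk |].
  assert (Hsp : spaced P (word k)).
  { apply (spaced_mono _ _ (fun u => x u = true)); [intros u Hu; apply Hw, Hu | exact Hx]. }
  intro u. unfold seed. rewrite <- Hw. tauto.
Qed.

(* Index i belongs to the class unpair1 i.  Stage i chooses pos i with pick, making it
   P-compatible with the seed of its class and the earlier positions of its class, and
   larger than twice every earlier position; history i lists (class, position) of the
   stages before i. *)
Definition stage_input (i : nat) (h : list (nat * nat)) : list nat :=
  seed_list (unpair1 i) ++ map snd (filter (fun cu => Nat.eqb (fst cu) (unpair1 i)) h).

Definition stage_bound (i : nat) (h : list (nat * nat)) : nat :=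
  (unpair1 (unpair1 i) + 2 * list_max (map snd h) + 1 + i).

Fixpoint history (i : nat) : list (nat * nat) :=
  match i with
  | 0 => []
  | S i' => (unpair1 i', pick (stage_input i' (history i')) (stage_bound i' (history i')))
              :: history i'
  end.

Definition pos (i : nat) : nat := pick (stage_input i (history i)) (stage_bound i (history i)).

Lemma in_history (i c u : nat) :
  In (c, u) (history i) <-> exists j, (j < i) /\ c = unpair1 j /\ u = pos j.
Proof.
  induction i as [| i IH]; simpl; [split; [tauto | intros [j [Hj _]]; lia] |].
  fold (pos i). rewrite IH. split.
  - intros [E | [j [Hj Hcu]]]; [injection E as <- <-; exists i; auto | exists j; split; [lia | exact Hcu]].
  - intros [j [Hj [-> ->]]]. destruct (Nat.eq_dec j i) as [-> | Hne]; [left; reflexivity |].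
    right. exists j. split; [lia | auto].
Qed.

Lemma pos_ge_bound (i : nat) : (stage_bound i (history i) <= pos i).
Proof. apply (proj1 (Hpick _ _)). Qed.

Lemma pos_earlier_le_max (i j : nat) : (j < i) -> (pos j <= list_max (map snd (history i))).
Proof.
  intro Hj. apply le_list_max. change (pos j) with (snd (unpair1 j, pos j)).
  apply in_map, in_history. eauto.
Qed.

Lemma pos_super (j i : nat) : (j < i) -> (2 * pos j < pos i).
Proof.
  intro Hj. pose proof (pos_earlier_le_max i j Hj). pose proof (pos_ge_bound i).
  unfold stage_bound in *. lia.
Qed.

Lemma pos_ge_index (i : nat) : (i <= pos i).
Proof. pose proof (pos_ge_bound i). unfold stage_bound in *. lia. Qed.

Lemma pos_ge_seed (i : nat) : (unpair1 (unpair1 i) <= pos i).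
Proof. pose proof (pos_ge_bound i). unfold stage_bound in *. lia. Qed.

Definition class_upto (k i u : nat) : Prop :=
  seed k u \/ exists j, (j < i) /\ unpair1 j = k /\ u = pos j.

Lemma in_stage_input (i u : nat) :
  In u (stage_input i (history i)) <-> class_upto (unpair1 i) i u.
Proof.
  unfold stage_input, class_upto. rewrite in_app_iff, in_seed_list, in_map_iff. split.
  - intros [Hs | [[c v] [Hv Hin]]]; [left; exact Hs | right].
    apply filter_In in Hin as [Hin Hc]. apply in_history in Hin as [j [Hj [-> ->]]].
    simpl in *. apply Nat.eqb_eq in Hc. eauto.
  - intros [Hs | [j [Hj [Hc ->]]]]; [left; exact Hs | right].
    exists (unpair1 j, pos j). split; [reflexivity |].
    apply filter_In. split; [apply in_history; eauto | apply Nat.eqb_eq; exact Hc].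
Qed.

Lemma stage_input_below (i e : nat) :
  In e (stage_input i (history i)) -> (e < stage_bound i (history i)).
Proof.
  intro He. apply in_stage_input in He as [Hs | [j [Hj [_ ->]]]]; unfold stage_bound.
  - apply seed_lt in Hs. lia.
  - pose proof (pos_earlier_le_max i j Hj). lia.
Qed.

Lemma class_upto_spaced (i : nat) : forall k, spaced P (class_upto k i).
Proof.
  induction i as [| i IH]; intro k.
  - apply (spaced_mono _ _ (seed k)); [| apply seed_spaced].
    intros u [Hs | [j [Hj _]]]; [exact Hs | lia].
  - destruct (Nat.eq_dec (unpair1 i) k) as [<- | Hk].
    + apply (spaced_mono _ _ (fun u => class_upto (unpair1 i) i u \/ u = pos i)).
      { intros u [Hs | [j [Hj [Hc ->]]]]; [left; left; exact Hs |].
        destruct (Nat.eq_dec j i) as [-> | Hne]; [right; reflexivity |].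
        left; right; exists j; split; [lia | auto]. }
      apply spaced_add; [apply IH |]. intros e He. apply in_stage_input in He.
      assert (HE : spaced P (fun u => In u (stage_input i (history i)))).
      { apply (spaced_mono _ _ (class_upto (unpair1 i) i)); [apply in_stage_input | apply IH]. }
      split.
      * pose proof (stage_input_below i e He). pose proof (pos_ge_bound i). lia.
      * exact (proj2 (Hpick _ _) HE (stage_input_below i) e He).
    + apply (spaced_mono _ _ (class_upto k i)); [| apply IH].
      intros u [Hs | [j [Hj [Hc ->]]]]; [left; exact Hs |].
      right. exists j. split; [| auto]. destruct (Nat.eq_dec j i) as [-> | Hne]; [congruence | lia].
Qed.

Definition class_set (k u : nat) : Prop := seed k u \/ exists j, unpair1 j = k /\ u = pos j.

Lemma class_set_spaced (k : nat) : spaced P (class_set k).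
Proof.
  assert (Hup : forall w, class_set k w -> exists i, forall i', (i <= i') -> class_upto k i' w).
  { intros w [Hs | [j [Hj ->]]]; [exists 0; left; exact Hs |].
    exists (S j). intros i' Hi'. right. exists j. repeat split; auto; lia. }
  intros u v Hu Hv. destruct (Hup u Hu) as [iu Hiu]. destruct (Hup v Hv) as [iv Hiv].
  apply (class_upto_spaced (iu + iv) k); [apply Hiu | apply Hiv]; lia.
Qed.

Lemma pos_lt_rev (i j : nat) : (pos i < pos j) -> (i < j).
Proof.
  intro H. destruct (Nat.lt_ge_cases i j) as [h | h]; [exact h |].
  destruct (Nat.eq_dec i j) as [-> | Hne]; [lia |].
  pose proof (pos_super j i ltac:(lia)). lia.
Qed.

Lemma pos_inj (i j : nat) : pos i = pos j -> i = j.
Proof.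
  intro H. destruct (Nat.lt_trichotomy i j) as [h | [h | h]]; [| exact h |];
    pose proof (pos_super _ _ h); lia.
Qed.

Lemma pos_sidon (i j i' j' : nat) : (j < i) -> (j' < i') ->
  (pos i - pos j = pos i' - pos j') -> i = i' /\ j = j'.
Proof.
  intros h1 h2 E.
  pose proof (pos_super _ _ h1). pose proof (pos_super _ _ h2).
  destruct (Nat.lt_trichotomy i i') as [h | [-> | h]].
  - pose proof (pos_super _ _ h). lia.
  - split; [reflexivity |]. apply pos_inj. lia.
  - pose proof (pos_super _ _ h). lia.
Qed.

Lemma pos_translation_rigid (n n' i1 i2 i1' i2' : nat) :
  i1 <> i2 -> (n <= pos i1) -> (n <= pos i2) ->
  (pos i1 - n + n' = pos i1') -> (pos i2 - n + n' = pos i2') -> i1 = i1' /\ n = n'.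
Proof.
  intros Hne h1 h2 e1 e2.
  assert (pos i1 <> pos i2) by (intro E; apply Hne, pos_inj, E).
  destruct (Nat.lt_gt_cases (pos i1) (pos i2)) as [[h | h] _]; [exact H | |].
  - pose proof (pos_lt_rev _ _ h). assert (i1' < i2') by (apply pos_lt_rev; lia).
    destruct (pos_sidon i2 i1 i2' i1' H0 H1 ltac:(lia)) as [_ <-]. split; [reflexivity | lia].
  - pose proof (pos_lt_rev _ _ h). assert (i2' < i1') by (apply pos_lt_rev; lia).
    destruct (pos_sidon i1 i2 i1' i2' H0 H1 ltac:(lia)) as [<- _]. split; [reflexivity | lia].
Qed.

Definition member (k t : nat) : nat := pos (Cantor.to_nat (k, t)).

Lemma member_ge (k t : nat) : (t + k <= member k t).
Proof.
  unfold member. pose proof (pos_ge_index (Cantor.to_nat (k, t))).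
  pose proof (Cantor.to_nat_non_decreasing k t). lia.
Qed.

Lemma member_ge_seed (k t : nat) : (unpair1 k <= member k t).
Proof. unfold member. rewrite <- (unpair1_pair k t) at 1. apply pos_ge_seed. Qed.

Lemma member_inj (k t t' : nat) : member k t = member k t' -> t = t'.
Proof. intro H. apply pos_inj, Cantor.to_nat_inj in H. congruence. Qed.

(* The point of the k-th family coded by z in {0,1}^N: its ones are the seed of k, the
   even members of class k, and the odd member 2t+1 exactly when z (unpair1 t) = 1, so
   that every coordinate of z is recorded at infinitely many slots. *)
Definition ones (k : nat) (z : Sigma) (p : nat) : Prop :=
  seed k p \/ (exists t, p = member k (2 * t)) \/
  (exists t, p = member k (2 * t + 1) /\ z (unpair1 t) = true).

Definition point (k : nat) (z : Sigma) : Sigma := fun p => dec (ones k z p).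

Lemma point_one (k : nat) (z : Sigma) (p : nat) : point k z p = true -> class_set k p.
Proof.
  intro H. apply dec_true in H as [Hs | [[t ->] | [t [-> _]]]]; [left; exact Hs | |];
    right; eexists; split; [apply unpair1_pair | reflexivity | apply unpair1_pair | reflexivity].
Qed.

Lemma point_X_P (k : nat) (z : Sigma) : X_P P (point k z).
Proof. apply (spaced_mono _ _ (class_set k)); [apply point_one | apply class_set_spaced]. Qed.

Lemma point_even (k : nat) (z : Sigma) (t : nat) : point k z (member k (2 * t)) = true.
Proof. apply dec_true. right; left; eauto. Qed.

Lemma point_odd (k : nat) (z : Sigma) (t : nat) :
  point k z (member k (2 * t + 1)) = z (unpair1 t).
Proof.
  destruct (z (unpair1 t)) eqn:Ez; [apply dec_true; right; right; eauto |].
  unfold point, dec. destruct excluded_middle_informative as [Hones | _]; [exfalso | reflexivity].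
  destruct Hones as [Hs | [[t' Ht'] | [t' [Ht' Hz]]]].
  - apply seed_lt in Hs. pose proof (member_ge_seed k (2 * t + 1)). lia.
  - apply member_inj in Ht'. lia.
  - apply member_inj in Ht'. replace t' with t in Hz by lia. congruence.
Qed.

Lemma point_seed (k : nat) (z : Sigma) (p : nat) : (p < unpair1 k) ->
  (point k z p = true <-> seed k p).
Proof.
  intro Hp. unfold point. rewrite dec_true. split; [| intro Hs; left; exact Hs].
  intros [Hs | [[t ->] | [t [-> _]]]]; [exact Hs | exfalso ..];
    [pose proof (member_ge_seed k (2 * t)) | pose proof (member_ge_seed k (2 * t + 1))]; lia.
Qed.

Lemma point_finite_dependence (k : nat) (z z' : Sigma) (p : nat) :
  agree_upto p z z' -> point k z p = point k z' p.
Proof.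
  intro H. assert (Hiff : ones k z p <-> ones k z' p).
  { unfold ones. split; intros [Hs | [Hev | [t [-> Hz]]]]; auto; right; right; exists t;
      split; auto; pose proof (member_ge k (2 * t + 1)); pose proof (unpair1_le t);
      [rewrite <- H | rewrite H]; auto; lia. }
  unfold point, dec.
  destruct excluded_middle_informative; destruct excluded_middle_informative; tauto.
Qed.

(* Far out, the ones of a point are positions, which grow faster than doubling. *)
Lemma point_sparse (k n : nat) (z : Sigma) : sparse (shiftn n (point k z)).
Proof.
  intro G. exists (G + unpair1 k). intros s s' Hs Hs' Hge Hlt.
  rewrite shiftn_spec in Hs, Hs'.
  apply point_one in Hs as [Hs | [i [_ Hi]]]; [apply seed_lt in Hs; lia |].
  apply point_one in Hs' as [Hs' | [i' [_ Hi']]]; [apply seed_lt in Hs'; lia |].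
  assert (i < i') by (apply pos_lt_rev; lia).
  pose proof (pos_super _ _ H). lia.
Qed.

(* If two shifted points eventually coincide, they come from the same class with the
   same shift: the far even members of class k are carried onto members of class k',
   and positions admit no nontrivial translations. *)
Lemma eventual_agreement_rigid (k n k' n' N : nat) (z z' : Sigma) :
  (forall q, (N <= q) -> point k z (n + q) = point k' z' (n' + q)) -> k = k' /\ n = n'.
Proof.
  intro Hag. set (T := (N + n + n' + unpair1 k')).
  assert (Hmatch : forall t, (T <= t) ->
            exists i', unpair1 i' = k' /\ (member k (2 * t) - n + n' = pos i')).
  { intros t Ht. pose proof (member_ge k (2 * t)).
    assert (Hone : point k' z' (n' + (member k (2 * t) - n)) = true).
    { rewrite <- Hag by lia. replace (n + _) with (member k (2 * t)) by lia.
      apply point_even. }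
    apply point_one in Hone as [Hs | [i' [Hc Hi']]]; [apply seed_lt in Hs; lia |].
    exists i'. split; [exact Hc | lia]. }
  destruct (Hmatch T (le_n T)) as [i1' [Hc1 E1]].
  destruct (Hmatch (S T) ltac:(lia)) as [i2' [_ E2]].
  pose proof (member_ge k (2 * T)). pose proof (member_ge k (2 * S T)).
  assert (Hdistinct : Cantor.to_nat (k, 2 * T) <> Cantor.to_nat (k, 2 * S T)).
  { intro E. apply Cantor.to_nat_inj in E. injection E. lia. }
  unfold member in *.
  destruct (pos_translation_rigid n n' _ _ i1' i2' Hdistinct ltac:(lia) ltac:(lia) E1 E2)
    as [<- En].
  split; [| exact En]. rewrite <- Hc1. symmetry. apply unpair1_pair.
Qed.

(* Distinct points of the scrambled family are never asymptotic: by rigidity they share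
   class and shift, and then the codes differ at infinitely many odd members. *)
Lemma point_not_asymptotic (k n k' n' : nat) (z z' : Sigma) :
  shiftn n (point k z) <> shiftn n' (point k' z') ->
  ~ asymptotic (shiftn n (point k z)) (shiftn n' (point k' z')).
Proof.
  intros Hne Has. destruct (Has (/ 2 ^ 0)%R (inv_pow2_pos 0)) as [N HN].
  assert (Hag : forall q, (N <= q) -> point k z (n + q) = point k' z' (n' + q)).
  { intros q Hq. pose proof (agree_of_d_lt 0 _ _ (HN q Hq) 0 (le_n 0)) as E.
    rewrite !shiftn_spec, !Nat.add_0_r in E. exact E. }
  destruct (eventual_agreement_rigid _ _ _ _ _ _ _ Hag) as [<- <-].
  assert (exists j, z j <> z' j) as [j Hj].
  { apply not_all_ex_not. intro H. apply Hne.
    replace z' with z by (apply functional_extensionality, H). reflexivity. }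
  set (t := Cantor.to_nat (j, N + n)).
  pose proof (member_ge k (2 * t + 1)). pose proof (Cantor.to_nat_non_decreasing j (N + n)).
  specialize (Hag (member k (2 * t + 1) - n) ltac:(unfold t in *; lia)).
  replace (n + (member k (2 * t + 1) - n)) with (member k (2 * t + 1)) in Hag by lia.
  rewrite !point_odd in Hag. unfold t in Hag. rewrite unpair1_pair in Hag. exact (Hj Hag).
Qed.

Definition piece (k n : nat) (x : Sigma) : Prop := exists z, x = shiftn n (point k z).

Definition decode (k n : nat) (x : Sigma) : Sigma :=
  fun j => x (member k (2 * Cantor.to_nat (j, n) + 1) - n).

Lemma decode_point (k n : nat) (z : Sigma) : decode k n (shiftn n (point k z)) = z.
Proof.
  apply functional_extensionality. intro j. unfold decode. rewrite shiftn_spec.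
  pose proof (member_ge k (2 * Cantor.to_nat (j, n) + 1)).
  pose proof (Cantor.to_nat_non_decreasing j n).
  replace (n + _) with (member k (2 * Cantor.to_nat (j, n) + 1)) by lia.
  rewrite point_odd, unpair1_pair. reflexivity.
Qed.

(* Each piece is a Cantor set: coding and decoding both have finite dependence. *)
Lemma piece_cantor (k n : nat) : Cantor_set (piece k n).
Proof.
  exists (fun z => shiftn n (point k z)), (decode k n).
  split; [| split; [| split]].
  - apply continuous_of_finite_dependence. intro m. exists (n + m). intros u v Huv i Hi.
    rewrite !shiftn_spec. apply point_finite_dependence. intros l Hl; apply Huv; lia.
  - intro x. reflexivity.
  - apply decode_point.
  - apply continuous_of_finite_dependence. intro m.
    destruct (bounded_on_initial_segment
                (fun j => member k (2 * Cantor.to_nat (j, n) + 1) - n) m) as [B HB].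
    exists B. intros u v Huv i Hi. apply Huv, HB, Hi.
Qed.

Definition scrambled_set (x : Sigma) : Prop := exists k n, piece k n x.

(* Density: the point of the seed coding x up to K agrees with x up to K. *)
Lemma scrambled_set_dense : dense_in (X_P P) scrambled_set.
Proof.
  split; [intros x [k [n [z ->]]]; apply shiftn_X_P, point_X_P |].
  intros x Hx eps He. destruct (small_pow eps He) as [K HK].
  destruct (seed_of_X_P x (S K) Hx) as [k [Hk Hseed]].
  exists (point k (fun _ => false)). split; [exists k, 0, (fun _ => false); reflexivity |].
  eapply Rlt_trans; [| exact HK]. apply d_lt_of_agree. intros i Hi.
  apply Bool.eq_iff_eq_true. rewrite point_seed, Hseed by lia. split; [| intros [_ E]]; auto with arith.
Qed.

Lemma scrambled_set_mycielski : Mycielski scrambled_set.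
Proof.
  exists (fun j => piece (unpair1 j) (snd (Cantor.of_nat j))).
  split; [intro j; apply piece_cantor |]. intro x. split.
  - intros [k [n Hx]]. exists (Cantor.to_nat (k, n)).
    rewrite unpair1_pair, Cantor.cancel_of_to. exact Hx.
  - intros [j Hx]. exists (unpair1 j), (snd (Cantor.of_nat j)). exact Hx.
Qed.

Lemma scrambled_set_shift_invariant (x : Sigma) : scrambled_set x -> scrambled_set (shift x).
Proof. intros [k [n [z ->]]]. exists k, (S n), z. reflexivity. Qed.

Lemma scrambled_set_banach_scrambled : banach_scrambled scrambled_set.
Proof.
  split.
  - exists (point 0 (fun _ => false)), (point 0 (fun _ => true)).
    split; [exists 0, 0, (fun _ => false); reflexivity |].
    split; [exists 0, 0, (fun _ => true); reflexivity |].
    intro E. pose proof (f_equal (fun x => x (member 0 (2 * 0 + 1))) E) as Hbit.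
    cbv beta in Hbit. rewrite !point_odd in Hbit. discriminate.
  - intros x y [k [n [z ->]]] [k' [n' [z' ->]]] Hne. split.
    + apply proximal_of_sparse; apply point_sparse.
    + apply point_not_asymptotic, Hne.
Qed.

End Construction.

Theorem mainTheorem5 (P : nat -> Prop) :
  (forall p, P p -> (1 <= p)) ->
  weakly_mixing (X_P P) ->
  exists S : Sigma -> Prop,
    dense_in (X_P P) S /\ Mycielski S /\
    (forall x, S x -> S (shift x)) /\
    banach_scrambled S.
Proof.
  intros _ Hwm. destruct (extender_exists P Hwm) as [pick Hpick].
  exists (scrambled_set P pick). split; [| split; [| split]].
  - apply scrambled_set_dense, Hpick.
  - apply scrambled_set_mycielski, Hpick.
  - apply scrambled_set_shift_invariant.
  - apply scrambled_set_banach_scrambled, Hpick.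
Qed.
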